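(* Every real hypersurface $M^3$ in $\mathbb{C}P^2$ or $\mathbb{C}H^2$ satisfies $\langle S^*X,Y\rangle=\frac{\rho^*}{2}\langle X,Y\rangle$ for all $X,Y\in W^\perp$, with $$\frac{\rho^*}{2}=4c+\lambda\nu-\mu^2,$$ where, at each point, $X_0\in W^\perp$ is a unit vector with $\langle AW,\varphi X_0\rangle=0$ (e.g. $X_0$ the unit vector with $AW=\alpha W+\beta X_0$, $\beta>0$, where $AW\ne\alpha W$), $Y_0=\varphi X_0$, $\lambda=\langle AX_0,X_0\rangle$, $\mu=\langle AX_0,Y_0\rangle$, $\nu=\langle AY_0,Y_0\rangle$.
   Context: $\mathbb{C}P^2$, $\mathbb{C}H^2$ carry Kähler metrics of constant holomorphic sectional curvature $4c\ne0$, complex structure $J$, connection $\widetilde\nabla$. For a real hypersurface $M$ with unit normal $\xi$: $W$ with $JW=\xi$; $W^\perp$ the holomorphic distribution; $\varphi X=JX-\langle X,W\rangle\xi$; $AX=-\widetilde\nabla_X\xi$; $\alpha=\langle AW,W\rangle$; $R$ the curvature tensor of $M$ ($R(X,Y)=\nabla_X\nabla_Y-\nabla_Y\nabla_X-\nabla_{[X,Y]}$). The *-Ricci tensor $S^*$ is defined by $\langle S^*X,Y\rangle=\tfrac12\operatorname{trace}\{Z\mapsto\varphi R(X,\varphi Y)Z\}$ and $\rho^*=\operatorname{trace}S^*$. *)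

(* Pointwise (linear-algebraic) model of a real hypersurface
   M^3 in CP^2 / CH^2 at a point p. *)
From HB Require Import structures.
From mathcomp Require Import all_boot all_order all_algebra.
Set Implicit Arguments. Unset Strict Implicit. Unset Printing Implicit Defensive.
Import Order.TTheory GRing.Theory Num.Theory.
Local Open Scope ring_scope.

Section Defs.
Variable R : realFieldType.
Notation V := 'rV[R]_4.   (* tangent space of the ambient space at p *)

Definition ip (u v : V) : R := (u *m v^T) 0 0.

(* J is the complex structure (acting on row vectors: Jv = v *m J) *)
Definition cplx_structure (J : 'M[R]_4) : Prop :=
  J *m J = - 1%:M /\ J *m J^T = 1%:M.

(* tangent space T_pM = xi^perp, orthogonal projection onto it *)
Definition tangent (xi X : V) : Prop := ip X xi = 0.
Definition tproj (xi v : V) : V := v - ip v xi *: xi.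

(* W with JW = xi *)
Definition Wvec (J : 'M[R]_4) (xi : V) : V := - (xi *m J).

Definition phi (J : 'M[R]_4) (xi X : V) : V := X *m J - ip X (Wvec J xi) *: xi.

(* curvature tensor of constant holomorphic sectional curvature 4c,
   convention R(X,Y) = [nabla_X,nabla_Y] - nabla_[X,Y] *)
Definition Ramb (c : R) (J : 'M[R]_4) (X Y Z : V) : V :=
  c *: (ip Y Z *: X - ip X Z *: Y + ip (Y *m J) Z *: (X *m J)
        - ip (X *m J) Z *: (Y *m J) - (2 * ip (X *m J) Y) *: (Z *m J)).

(* curvature tensor of M (Gauss equation), for X Y Z tangent;
   A is the shape operator, acting as X |-> X *m A on tangent vectors *)
Definition Rhyp (c : R) (J A : 'M[R]_4) (xi X Y Z : V) : V :=
  tproj xi (Ramb c J X Y Z) + ip (Y *m A) Z *: (X *m A)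
  - ip (X *m A) Z *: (Y *m A).

(* <S* X, Y> = 1/2 trace_{T_pM} (Z |-> phi R(X, phi Y) Z);
   trace over T_pM computed as trace of the composite with tproj on V,
   using the standard orthonormal basis of V *)
Definition stars (c : R) (J A : 'M[R]_4) (xi X Y : V) : R :=
  2^-1 * \sum_(i < 4)
    ip (phi J xi (Rhyp c J A xi X (phi J xi Y) (tproj xi (delta_mx 0 i))))
       (delta_mx 0 i).

Definition rhostar (c : R) (J A : 'M[R]_4) (xi : V) : R :=
  \sum_(i < 4) stars c J A xi (tproj xi (delta_mx 0 i)) (tproj xi (delta_mx 0 i)).

End Defs.

From HB Require Import structures.
From mathcomp Require Import all_boot all_order all_algebra.
From mathcomp Require Import ring.
Set Implicit Arguments. Unset Strict Implicit. Unset Printing Implicit Defensive.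
Import Order.TTheory GRing.Theory Num.Theory.
Local Open Scope ring_scope.

(* At a point of M choose the frame xi, W = - xi J, X0, Y0 = X0 J of the ambient
   tangent space; it is orthonormal, J permutes it up to sign, and since
   <AW, Y0> = 0 the shape operator on T_pM = <W, X0, Y0> has matrix
   [[alpha, beta, 0], [beta, lambda, mu], [0, mu, nu]].  Traces do not depend on
   the orthonormal basis used, so S* and rho* may be evaluated in this frame, where
   the Gauss equation gives <S* X, Y> = (4c + lambda nu - mu^2) <X, Y> on W^perp
   by direct computation, while S*(., W) = 0 because phi W = 0. *)

Section InnerProduct.
Variable R : realFieldType.
Local Notation V := 'rV[R]_4.
Implicit Types (u v w : V) (F : 'M[R]_4).

Lemma ipE u v : ip u v = \sum_i u 0 i * v 0 i.
Proof. by rewrite /ip mxE; apply: eq_bigr => i _; rewrite mxE. Qed.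

Lemma ipC u v : ip u v = ip v u.
Proof. by rewrite !ipE; apply: eq_bigr => i _; rewrite mulrC. Qed.

Lemma ipDl u v w : ip (u + v) w = ip u w + ip v w.
Proof. by rewrite /ip mulmxDl mxE. Qed.

Lemma ipZl k u v : ip (k *: u) v = k * ip u v.
Proof. by rewrite /ip -scalemxAl mxE. Qed.

Lemma ipNl u v : ip (- u) v = - ip u v.
Proof. by rewrite -scaleN1r ipZl mulN1r. Qed.

Lemma ipDr u v w : ip w (u + v) = ip w u + ip w v.
Proof. by rewrite ipC ipDl !(ipC w). Qed.

Lemma ipZr k u v : ip v (k *: u) = k * ip v u.
Proof. by rewrite ipC ipZl ipC. Qed.

Lemma ipNr u v : ip v (- u) = - ip v u.
Proof. by rewrite ipC ipNl ipC. Qed.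

Lemma ip_deltar v i : ip v (delta_mx 0 i) = v 0 i.
Proof. by rewrite ipC /ip -rowE !mxE. Qed.

Lemma ip_rows F i j : ip (row i F) (row j F) = (F *m F^T) i j.
Proof. by rewrite ipE mxE; apply: eq_bigr => k _; rewrite !mxE. Qed.

Section OrthonormalFrame.
Variable F : 'M[R]_4.
Hypothesis F_orthonormal : F *m F^T = 1%:M.

Lemma frame_decomp v : v = \sum_j ip v (row j F) *: row j F.
Proof.
have FtF : F^T *m F = 1%:M by apply: mulmx1C.
rewrite -{1}[v]mulmx1 -FtF mulmxA mulmx_sum_row.
by apply: eq_bigr => j _; rewrite ipE mxE; congr (_ *: _); apply: eq_bigr => k _; rewrite !mxE.
Qed.

Lemma delta_frame i : delta_mx 0 i = \sum_j F j i *: row j F.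
Proof.
by rewrite {1}(frame_decomp (delta_mx 0 i)); apply: eq_bigr => j _; rewrite ipC ip_deltar mxE.
Qed.

Lemma trace_frame (T : V -> V) :
  {morph T : u v / u + v} -> (forall k, {morph T : u / k *: u}) ->
  \sum_i ip (T (delta_mx 0 i)) (delta_mx 0 i) = \sum_j ip (T (row j F)) (row j F).
Proof.
move=> TD TZ; have T0 : T 0 = 0 by rewrite -[X in T X](scale0r 0) TZ scale0r.
transitivity (\sum_i \sum_j F j i * T (row j F) 0 i).
  apply: eq_bigr => i _.
  rewrite ip_deltar {1}delta_frame (big_morph T TD T0) summxE.
  by apply: eq_bigr => j _; rewrite TZ mxE.
rewrite exchange_big /=; apply: eq_bigr => j _.
by rewrite ipE; apply: eq_bigr => i _; rewrite !mxE mulrC.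
Qed.

Lemma trace2_frame (B : V -> V -> R) :
  (forall w, {morph B^~ w : u v / u + v}) ->
  (forall k w, {morph B^~ w : u / k *: u >-> k * u}) ->
  (forall w, {morph B w : u v / u + v}) ->
  (forall k w, {morph B w : u / k *: u >-> k * u}) ->
  \sum_i B (delta_mx 0 i) (delta_mx 0 i) = \sum_j B (row j F) (row j F).
Proof.
move=> BDl BZl BDr BZr.
have B0l w : B 0 w = 0 by rewrite -[X in B X](scale0r 0) BZl mul0r.
have B0r w : B w 0 = 0 by rewrite -[X in B w X](scale0r 0) BZr mul0r.
transitivity (\sum_j \sum_k (F *m F^T) j k * B (row j F) (row k F)).
  rewrite (eq_bigr (fun i => \sum_j \sum_k F j i * F k i * B (row j F) (row k F))).
    rewrite exchange_big; apply: eq_bigr => j _; rewrite exchange_big.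
    apply: eq_bigr => k _; rewrite mxE -mulr_suml; congr (_ * _).
    by apply: eq_bigr => i _; rewrite mxE.
  move=> i _; rewrite [X in B X]delta_frame (big_morph _ (BDl _) (B0l _)).
  apply: eq_bigr => j _; rewrite BZl delta_frame (big_morph _ (BDr _) (B0r _)) mulr_sumr.
  by apply: eq_bigr => k _; rewrite BZr mulrA.
apply: eq_bigr => j _; rewrite F_orthonormal (bigD1 j) //= big1 ?addr0.
  by rewrite mxE eqxx mul1r.
by move=> k /negPf kj; rewrite mxE eq_sym kj mul0r.
Qed.

End OrthonormalFrame.
End InnerProduct.

Section ComplexStructure.
Variables (R : realFieldType) (J : 'M[R]_4).
Hypothesis J_cplx : cplx_structure J.
Implicit Types u v : 'rV[R]_4.

Lemma cplx_sqr : J *m J = - 1%:M. Proof. by case: J_cplx. Qed.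

Lemma cplx_tr : J^T = - J.
Proof.
case: J_cplx => JJ JJt.
by rewrite -[J^T]mul1mx -[1%:M]opprK -JJ mulNmx -mulmxA JJt mulmx1.
Qed.

Lemma mulmxJJ u : u *m J *m J = - u.
Proof. by rewrite -mulmxA cplx_sqr mulmxN mulmx1. Qed.

Lemma ipJl u v : ip (u *m J) v = - ip u (v *m J).
Proof. by rewrite /ip trmx_mul cplx_tr mulNmx mulmxN mulmxA [in RHS]mxE opprK. Qed.

Lemma ipJJ u v : ip (u *m J) (v *m J) = ip u v.
Proof. by rewrite ipJl mulmxJJ ipNr opprK. Qed.

Lemma ipJ_self u : ip (u *m J) u = 0.
Proof.
by apply/eqP; rewrite -[_ == 0](mulrn_eq0 _ 2) mulr2n {1}ipJl ipC addNr.
Qed.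

End ComplexStructure.

Section Linearity.
Variables (R : realFieldType) (c : R) (J A : 'M[R]_4) (xi : 'rV[R]_4).
Implicit Types u v X Y Z : 'rV[R]_4.

Ltac entrywise := rewrite /Rhyp /Ramb /tproj /phi;
  do 3 rewrite ?(mulmxDl, mulNmx, ipDl, ipDr, ipNl, ipNr, ipZl, ipZr) -?scalemxAl;
  apply/rowP => k; rewrite !mxE; ring.

Lemma phiD u v : phi J xi (u + v) = phi J xi u + phi J xi v. Proof. entrywise. Qed.
Lemma phiZ a u : phi J xi (a *: u) = a *: phi J xi u. Proof. entrywise. Qed.
Lemma tprojD u v : tproj xi (u + v) = tproj xi u + tproj xi v. Proof. entrywise. Qed.
Lemma tprojZ a u : tproj xi (a *: u) = a *: tproj xi u. Proof. entrywise. Qed.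

Local Notation Rh := (Rhyp c J A xi).

Lemma RhypD1 u v Y Z : Rh (u + v) Y Z = Rh u Y Z + Rh v Y Z. Proof. entrywise. Qed.
Lemma RhypZ1 a u Y Z : Rh (a *: u) Y Z = a *: Rh u Y Z. Proof. entrywise. Qed.
Lemma RhypD2 u v X Z : Rh X (u + v) Z = Rh X u Z + Rh X v Z. Proof. entrywise. Qed.
Lemma RhypZ2 a u X Z : Rh X (a *: u) Z = a *: Rh X u Z. Proof. entrywise. Qed.
Lemma RhypD3 u v X Y : Rh X Y (u + v) = Rh X Y u + Rh X Y v. Proof. entrywise. Qed.
Lemma RhypZ3 a u X Y : Rh X Y (a *: u) = a *: Rh X Y u. Proof. entrywise. Qed.

Local Notation S := (stars c J A xi).

Lemma starsDl X X' Y : S (X + X') Y = S X Y + S X' Y.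
Proof.
rewrite /stars -mulrDr -big_split; congr (_ * _); apply: eq_bigr => i _.
by rewrite RhypD1 phiD ipDl.
Qed.

Lemma starsZl a X Y : S (a *: X) Y = a * S X Y.
Proof.
rewrite /stars [RHS]mulrCA [in RHS]mulr_sumr; congr (_ * _); apply: eq_bigr => i _.
by rewrite RhypZ1 phiZ ipZl.
Qed.

Lemma starsDr X Y Y' : S X (Y + Y') = S X Y + S X Y'.
Proof.
rewrite /stars -mulrDr -big_split; congr (_ * _); apply: eq_bigr => i _.
by rewrite phiD RhypD2 phiD ipDl.
Qed.

Lemma starsZr a X Y : S X (a *: Y) = a * S X Y.
Proof.
rewrite /stars [RHS]mulrCA [in RHS]mulr_sumr; congr (_ * _); apply: eq_bigr => i _.
by rewrite phiZ RhypZ2 phiZ ipZl.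
Qed.

Lemma stars_phi0 X Y : phi J xi Y = 0 -> S X Y = 0.
Proof.
move=> phiY; rewrite /stars phiY big1 ?mulr0 // => i _.
by rewrite -[V in Rh X V _](scale0r 0) RhypZ2 phiZ ipZl mul0r.
Qed.

End Linearity.

Section AdaptedFrame.
Variables (R : realFieldType) (J : 'M[R]_4) (xi X0 : 'rV[R]_4).
Hypotheses (J_cplx : cplx_structure J) (xi_unit : ip xi xi = 1).
Hypotheses (X0_tangent : tangent xi X0) (X0_perpW : ip X0 (Wvec J xi) = 0).
Hypothesis X0_unit : ip X0 X0 = 1.
Local Notation W := (Wvec J xi).
Local Notation Y0 := (X0 *m J).

Lemma mulxiJ : xi *m J = - W. Proof. by rewrite /Wvec opprK. Qed.
Lemma mulWJ : W *m J = xi. Proof. by rewrite /Wvec mulNmx mulmxJJ ?opprK. Qed.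
Lemma phi_X0 : phi J xi X0 = Y0. Proof. by rewrite /phi X0_perpW scale0r subr0. Qed.

Lemma ip_xiW : ip xi W = 0. Proof. by rewrite /Wvec ipNr ipC ipJ_self ?oppr0. Qed.
Lemma ip_xiX0 : ip xi X0 = 0. Proof. by rewrite ipC. Qed.
Lemma ip_xiY0 : ip xi Y0 = 0.
Proof. by rewrite ipC ipJl // mulxiJ ipNr opprK X0_perpW. Qed.
Lemma ip_WW : ip W W = 1. Proof. by rewrite /Wvec ipNl ipNr opprK ipJJ. Qed.
Lemma ip_WX0 : ip W X0 = 0. Proof. by rewrite ipC. Qed.
Lemma ip_WY0 : ip W Y0 = 0. Proof. by rewrite /Wvec ipNl ipJJ // ip_xiX0 oppr0. Qed.
Lemma ip_X0Y0 : ip X0 Y0 = 0. Proof. by rewrite ipC ipJ_self. Qed.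
Lemma ip_Y0Y0 : ip Y0 Y0 = 1. Proof. by rewrite ipJJ. Qed.

Definition frame_ip := (xi_unit, ip_xiW, ip_xiX0, ip_xiY0, ip_WW, ip_WX0, ip_WY0,
  X0_unit, ip_X0Y0, ip_Y0Y0, etrans (ipC W xi) ip_xiW, etrans (ipC X0 xi) ip_xiX0,
  etrans (ipC Y0 xi) ip_xiY0, etrans (ipC X0 W) ip_WX0, etrans (ipC Y0 W) ip_WY0,
  etrans (ipC Y0 X0) ip_X0Y0).

(* Locked: unfolding [fvec] during keyed matching makes the rewrites below very slow. *)
Fact fvec_key : unit. Proof. by []. Qed.
Definition fvec := locked_with fvec_key
  (fun a0 a1 a2 a3 : R => a0 *: xi + a1 *: W + a2 *: X0 + a3 *: Y0).

Lemma fvecE a0 a1 a2 a3 : fvec a0 a1 a2 a3 = a0 *: xi + a1 *: W + a2 *: X0 + a3 *: Y0.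
Proof. by rewrite [fvec]unlock. Qed.

Lemma ip_fvec a0 a1 a2 a3 b0 b1 b2 b3 :
  ip (fvec a0 a1 a2 a3) (fvec b0 b1 b2 b3) = a0 * b0 + a1 * b1 + a2 * b2 + a3 * b3.
Proof. by rewrite !fvecE !ipDl !ipDr !ipZl !ipZr !frame_ip; ring. Qed.

Lemma fvecD a0 a1 a2 a3 b0 b1 b2 b3 :
  fvec a0 a1 a2 a3 + fvec b0 b1 b2 b3 = fvec (a0 + b0) (a1 + b1) (a2 + b2) (a3 + b3).
Proof. by apply/rowP => k; rewrite ?fvecE !mxE; ring. Qed.

Lemma fvecZ k a0 a1 a2 a3 :
  k *: fvec a0 a1 a2 a3 = fvec (k * a0) (k * a1) (k * a2) (k * a3).
Proof. by apply/rowP => i; rewrite ?fvecE !mxE; ring. Qed.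

Lemma fvecN a0 a1 a2 a3 : - fvec a0 a1 a2 a3 = fvec (- a0) (- a1) (- a2) (- a3).
Proof. by apply/rowP => k; rewrite ?fvecE !mxE; ring. Qed.

Lemma fvecJ a0 a1 a2 a3 : fvec a0 a1 a2 a3 *m J = fvec a1 (- a0) (- a3) a2.
Proof.
rewrite !fvecE !mulmxDl -!scalemxAl mulxiJ mulWJ mulmxJJ //.
by apply/rowP => k; rewrite ?fvecE !mxE; ring.
Qed.

Lemma tproj_fvec a0 a1 a2 a3 : tproj xi (fvec a0 a1 a2 a3) = fvec 0 a1 a2 a3.
Proof.
rewrite /tproj; have -> : ip (fvec a0 a1 a2 a3) xi = a0.
  by rewrite !fvecE !ipDl !ipZl !frame_ip; ring.
by apply/rowP => k; rewrite ?fvecE !mxE; ring.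
Qed.

Lemma phi_fvec a0 a1 a2 a3 : phi J xi (fvec a0 a1 a2 a3) = fvec 0 (- a0) (- a3) a2.
Proof.
rewrite /phi fvecJ.
have -> : ip (fvec a0 a1 a2 a3) W = a1 by rewrite !fvecE !ipDl !ipZl !frame_ip; ring.
by apply/rowP => k; rewrite ?fvecE !mxE; ring.
Qed.

Definition frame_vecs := [:: fvec 1 0 0 0; fvec 0 1 0 0; fvec 0 0 1 0; fvec 0 0 0 1].
Definition frame : 'M[R]_4 := \matrix_(i < 4) frame_vecs`_i.

Lemma sum_frame_rows (f : 'rV[R]_4 -> R) :
  \sum_j f (row j frame) = \sum_(e <- frame_vecs) f e.
Proof. by rewrite !big_ord_recr big_ord0 !big_cons big_nil /= !rowK /=; ring. Qed.

Lemma frame_orthonormal : frame *m frame^T = 1%:M.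
Proof.
apply/matrixP => i j; rewrite -ip_rows !rowK !mxE.
by case: i j => [[|[|[|[|i]]]] ?] [[|[|[|[|j]]]] ?] //=; rewrite ip_fvec; ring.
Qed.

Lemma fvec_coords v : v = fvec (ip v xi) (ip v W) (ip v X0) (ip v Y0).
Proof.
rewrite {1}(frame_decomp frame_orthonormal v) !big_ord_recr big_ord0 /= !rowK /=.
by apply/rowP => k; rewrite !fvecE !ipDr !ipZr !mxE; ring.
Qed.

Variable A : 'M[R]_4.
Hypothesis A_tangent : forall X, tangent xi X -> tangent xi (X *m A).
Hypothesis A_sym : forall X Y, tangent xi X -> tangent xi Y -> ip (X *m A) Y = ip X (Y *m A).
Hypothesis AW_perpY0 : ip (W *m A) (phi J xi X0) = 0.
Local Notation alpha := (ip (W *m A) W).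
Local Notation beta := (ip (W *m A) X0).
Local Notation lambda := (ip (X0 *m A) X0).
Local Notation mu := (ip (X0 *m A) Y0).
Local Notation nu := (ip (Y0 *m A) Y0).

Lemma W_tangent : tangent xi W. Proof. by rewrite /tangent ipC ip_xiW. Qed.
Lemma Y0_tangent : tangent xi Y0. Proof. by rewrite /tangent ipC ip_xiY0. Qed.

Lemma fvec_AW : W *m A = fvec 0 alpha beta 0.
Proof.
rewrite {1}(fvec_coords (W *m A)) (A_tangent W_tangent).
by rewrite -phi_X0 AW_perpY0.
Qed.

Lemma fvec_AX0 : X0 *m A = fvec 0 beta lambda mu.
Proof.
rewrite {1}(fvec_coords (X0 *m A)) (A_tangent X0_tangent).
by rewrite (A_sym X0_tangent W_tangent) ipC.
Qed.

Lemma fvec_AY0 : Y0 *m A = fvec 0 0 mu nu.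
Proof.
rewrite {1}(fvec_coords (Y0 *m A)) (A_tangent Y0_tangent) (A_sym Y0_tangent W_tangent).
by rewrite (A_sym Y0_tangent X0_tangent) ipC -phi_X0 AW_perpY0 phi_X0 ipC.
Qed.

Lemma fvecA a1 a2 a3 : fvec 0 a1 a2 a3 *m A =
  fvec 0 (a1 * alpha + a2 * beta) (a1 * beta + a2 * lambda + a3 * mu) (a2 * mu + a3 * nu).
Proof.
rewrite [in LHS]fvecE !mulmxDl -!scalemxAl.
rewrite [in LHS]fvec_AW [in LHS]fvec_AX0 [in LHS]fvec_AY0.
by apply/rowP => k; rewrite ?fvecE !mxE; ring.
Qed.

Lemma holomorphic_fvec X :
  tangent xi X -> ip X W = 0 -> X = fvec 0 0 (ip X X0) (ip X Y0).
Proof. by rewrite /tangent => Xt XW; rewrite {1}(fvec_coords X) Xt XW. Qed.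

Variable c : R.
Local Notation S := (stars c J A xi).

Lemma stars_frame X Y :
  S X Y = 2^-1 * \sum_(e <- frame_vecs) ip (phi J xi (Rhyp c J A xi X (phi J xi Y) (tproj xi e))) e.
Proof.
rewrite /stars -sum_frame_rows; congr (_ * _).
apply: (trace_frame frame_orthonormal
  (T := fun u => phi J xi (Rhyp c J A xi X (phi J xi Y) (tproj xi u)))).
  by move=> u v; rewrite tprojD RhypD3 phiD.
by move=> a u; rewrite tprojZ RhypZ3 phiZ.
Qed.

Lemma rhostar_frame : rhostar c J A xi = \sum_(e <- frame_vecs) S (tproj xi e) (tproj xi e).
Proof.
rewrite /rhostar -sum_frame_rows.
apply: (trace2_frame frame_orthonormal (B := fun u v => S (tproj xi u) (tproj xi v))).
- by move=> w u v; rewrite tprojD starsDl.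
- by move=> a w u; rewrite tprojZ starsZl.
- by move=> w u v; rewrite tprojD starsDr.
- by move=> a w u; rewrite tprojZ starsZr.
Qed.

Lemma stars_holomorphic a2 a3 b2 b3 :
  S (fvec 0 0 a2 a3) (fvec 0 0 b2 b3) = (4 * c + lambda * nu - mu ^+ 2) * (a2 * b2 + a3 * b3).
Proof.
rewrite stars_frame !big_cons big_nil /Rhyp /Ramb.
rewrite ?(phi_fvec, tproj_fvec, fvecJ, fvecA, ip_fvec, fvecZ, fvecN, fvecD).
by field.
Qed.

Lemma stars_holomorphic_ip X Y :
  tangent xi X -> ip X W = 0 -> tangent xi Y -> ip Y W = 0 ->
  S X Y = (4 * c + lambda * nu - mu ^+ 2) * ip X Y.
Proof.
move=> Xt XW Yt YW; rewrite (holomorphic_fvec Xt XW) (holomorphic_fvec Yt YW).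
by rewrite stars_holomorphic ip_fvec; ring.
Qed.

Lemma rhostar_half : rhostar c J A xi / 2 = 4 * c + lambda * nu - mu ^+ 2.
Proof.
have phiW : phi J xi (fvec 0 1 0 0) = 0.
  by rewrite phi_fvec; apply/rowP => k; rewrite fvecE !mxE; ring.
rewrite rhostar_frame !big_cons big_nil !tproj_fvec !stars_holomorphic stars_phi0 //.
by field.
Qed.

End AdaptedFrame.

Theorem proposition14 (R : realFieldType) (c : R) (J A : 'M[R]_4)
    (xi X0 : 'rV[R]_4) :
  c != 0 ->
  cplx_structure J ->
  ip xi xi = 1 ->
  (forall X, tangent xi X -> tangent xi (X *m A)) ->
  (forall X Y, tangent xi X -> tangent xi Y -> ip (X *m A) Y = ip X (Y *m A)) ->
  tangent xi X0 -> ip X0 (Wvec J xi) = 0 -> ip X0 X0 = 1 ->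
  ip (Wvec J xi *m A) (phi J xi X0) = 0 ->
  let Y0 := phi J xi X0 in
  let lambda := ip (X0 *m A) X0 in
  let mu := ip (X0 *m A) Y0 in
  let nu := ip (Y0 *m A) Y0 in
  (forall X Y, tangent xi X -> ip X (Wvec J xi) = 0 ->
               tangent xi Y -> ip Y (Wvec J xi) = 0 ->
     stars c J A xi X Y = rhostar c J A xi / 2 * ip X Y) /\
  rhostar c J A xi / 2 = 4 * c + lambda * nu - mu ^+ 2.
Proof.
move=> _ J_cplx xi_unit A_tangent A_sym X0_tangent X0_perpW X0_unit AW_perpY0 Y0 lambda mu nu.
have rho_half : rhostar c J A xi / 2 = 4 * c + lambda * nu - mu ^+ 2.
  by rewrite /nu /mu /lambda /Y0 phi_X0 // (rhostar_half (X0 := X0)).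
split=> // X Y Xt XW Yt YW; rewrite rho_half /nu /mu /lambda /Y0 phi_X0 //.
by apply: stars_holomorphic_ip.
Qed.
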